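(* Let $A=(a_{ij})\in F$. Then $a_{22}=a_{11}'$ and $a_{21}=a_{12}'$, where $'$ denotes the automorphism of $K[X;Y]$ defined below.
   Context: $K$ is an infinite field of characteristic different from 2. Let $X=\{x_1,x_2,x_1',x_2'\}$ and $Y=\{y_1,y_2,y_1',y_2'\}$, and let $K[X;Y]\cong K[X]\otimes_K E(Y)$ be the free supercommutative algebra: the $x$'s are even commuting variables, the $y$'s are odd pairwise anticommuting variables, and $E(Y)$ is the Grassmann algebra on the vector space with basis $Y$. Put $C_1=\begin{pmatrix} x_1&y_1\\ y_1'&x_1'\end{pmatrix}$, $C_2=\begin{pmatrix} x_2&y_2\\ y_2'&x_2'\end{pmatrix}$, and let $F=K[C_1,C_2]$ be the unital $K$-subalgebra of $M_2(K[X;Y])$ generated by $C_1,C_2$. The map $'$ is the algebra automorphism of $K[X;Y]$ (of order two) given by $x_i\mapsto x_i'$, $x_i'\mapsto x_i$, $y_i\mapsto y_i'$, $y_i'\mapsto y_i$ for $i=1,2$. *)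

From HB Require Import structures.
From mathcomp Require Import all_boot all_order all_algebra.
From mathcomp Require Import mpoly.
Set Implicit Arguments. Unset Strict Implicit. Unset Printing Implicit Defensive.
Import Order.TTheory GRing.Theory.
Local Open Scope ring_scope.

(* Indexing conventions (both for even and odd variables):
   0 ~ x_1 / y_1,  1 ~ x_2 / y_2,  2 ~ x_1' / y_1',  3 ~ x_2' / y_2'.        *)

Section Super.
Variable K : fieldType.

(* The free supercommutative algebra K[X;Y] = K[X] (x) E(Y):
   an element is a family (p_S)_S indexed by subsets S of the odd variables,
   standing for  \sum_S p_S * y_S  where  y_S = y_{s_1} ... y_{s_k}
   with s_1 < ... < s_k, and p_S in the polynomial ring K[X] = {mpoly K[4]}. *)
Definition SA := {ffun {set 'I_4} -> {mpoly K[4]}}.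

(* sign of y_S * y_T = sgnST * y_(S :|: T) for disjoint S, T: the number of
   inversions (i in S, j in T, j < i). *)
Definition ninv (S T : {set 'I_4}) : nat :=
  #|[set p : 'I_4 * 'I_4 | (p.1 \in S) && (p.2 \in T) && (p.2 < p.1)%N]|.

Definition sa_mul (f g : SA) : SA :=
  [ffun U => \sum_(S : {set 'I_4}) \sum_(T : {set 'I_4} |
       [disjoint S & T] && (S :|: T == U))
       ((-1) ^+ ninv S T) * (f S * g T)].

Definition sa_poly (p : {mpoly K[4]}) : SA :=
  [ffun U => if U == set0 then p else 0].
Definition sa_x (i : 'I_4) : SA := sa_poly 'X_i.
Definition sa_y (i : 'I_4) : SA := [ffun U => if U == [set i] then 1 else 0].
Definition sa_scal (c : K) : SA := sa_poly c%:MP.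

Definition sw (i : 'I_4) : 'I_4 := inord ((i + 2) %% 4).

(* inversions created by applying sw to the increasing word y_S *)
Definition swinv (S : {set 'I_4}) : nat :=
  #|[set p : 'I_4 * 'I_4 | (p.1 \in S) && (p.2 \in S) && (p.1 < p.2)%N
                            && (sw p.2 < sw p.1)%N]|.

Definition poly_prime (p : {mpoly K[4]}) : {mpoly K[4]} :=
  comp_mpoly [tuple 'X_(sw i) | i < 4] p.

(* the algebra automorphism ' : x_i <-> x_i', y_i <-> y_i':
   (\sum_S p_S y_S)' = \sum_S p_S' (y_{sw s_1} ... y_{sw s_k})
                     = \sum_S p_S' (-1)^(swinv S) y_(sw @: S). *)
Definition sa_prime (f : SA) : SA :=
  [ffun U => \sum_(S : {set 'I_4} | sw @: S == U)
                 ((-1) ^+ swinv S) * poly_prime (f S)].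

Definition mx2 := 'M[SA]_2.

Definition mx2_mul (A B : mx2) : mx2 :=
  \matrix_(i, j) \sum_(k < 2) sa_mul (A i k) (B k j).

Definition mx2_of (a b c d : SA) : mx2 :=
  \matrix_(i < 2, j < 2)
    if i == 0 then (if j == 0 then a else b) else (if j == 0 then c else d).

Definition C1 : mx2 := mx2_of (sa_x 0) (sa_y 0) (sa_y 2) (sa_x 2).
Definition C2 : mx2 := mx2_of (sa_x 1) (sa_y 1) (sa_y 3) (sa_x 3).

(* F = K[C1, C2]: the unital K-subalgebra of M_2(K[X;Y]) generated by C1, C2,
   i.e. the smallest set containing the scalar matrices c*I (c in K), C1, C2,
   closed under sum and product (K-scaling is product with c*I). *)
Inductive inF : mx2 -> Prop :=
| inF_scal (c : K) : inF (mx2_of (sa_scal c) 0 0 (sa_scal c))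
| inF_C1 : inF C1
| inF_C2 : inF C2
| inF_add A B : inF A -> inF B -> inF (A + B)
| inF_mul A B : inF A -> inF B -> inF (mx2_mul A B).

End Super.

From HB Require Import structures.
From mathcomp Require Import all_boot all_order all_algebra.
From mathcomp Require Import mpoly ring.
Set Implicit Arguments. Unset Strict Implicit.
Import GRing.Theory.
Local Open Scope ring_scope.

(* The map ' is a morphism of superalgebras: it is additive, it is
   multiplicative because the signs it introduces are compatible with the
   signs of the product (a parity identity on inversion counts, which only
   involves the four odd variables and is checked by evaluation), and it
   exchanges x_i with x_i' and y_i with y_i'.  Hence the matrices
   [[a, b], [b', a']] with a'' = a and b'' = b contain the scalars, C_1 and
   C_2, and are closed under sums and products; so they contain F. *)

(* [sw] goes through [inord] and finite sets are locked, so neither evaluates;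
   [sw_ord], [ord4_pairs], [ninv_pred] and [swinv_pred] are computable copies
   used to check the parity identity below by evaluation. *)
Definition sw_ord (i : 'I_4) : 'I_4 :=
  Ordinal (ltn_pmod (i + 2) (isT : 0 < 4)%N).

Lemma sw_ordE i : sw i = sw_ord i.
Proof. by apply/val_inj; rewrite /= inordK // ltn_pmod. Qed.

Lemma swK : involutive sw.
Proof.
by move=> i; rewrite !sw_ordE; apply/val_inj; case: i => -[|[|[|[|//]]]].
Qed.

Lemma sw_inj : injective sw.
Proof. exact: inv_inj swK. Qed.

Lemma mem_imset_sw (S : {set 'I_4}) i : (i \in sw @: S) = (sw i \in S).
Proof. by rewrite -[in LHS](swK i) mem_imset //; apply: sw_inj. Qed.

Lemma imset_swK : involutive (fun S : {set 'I_4} => sw @: S).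
Proof. by move=> S; apply/setP => i; rewrite !mem_imset_sw swK. Qed.

Lemma imset_sw_inj : injective (fun S : {set 'I_4} => sw @: S).
Proof. by move=> S T eST; rewrite -(imset_swK S) eST imset_swK. Qed.

Definition ord4 : seq 'I_4 :=
  [:: @Ordinal 4 0 isT; @Ordinal 4 1 isT; @Ordinal 4 2 isT; @Ordinal 4 3 isT].

Definition ord4_pairs : seq ('I_4 * 'I_4) := [seq (i, j) | i <- ord4, j <- ord4].

Definition bits4 (b0 b1 b2 b3 : bool) : pred 'I_4 :=
  fun i => nth false [:: b0; b1; b2; b3] i.

Definition ninv_pred (s t : pred 'I_4) : nat :=
  count (fun p : 'I_4 * 'I_4 => s p.1 && t p.2 && (p.2 < p.1)%N) ord4_pairs.

Definition swinv_pred (s : pred 'I_4) : nat :=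
  count (fun p : 'I_4 * 'I_4 =>
           s p.1 && s p.2 && (p.1 < p.2)%N && (sw_ord p.2 < sw_ord p.1)%N)
        ord4_pairs.

Lemma card_set_ord4_pairs (P : pred ('I_4 * 'I_4)) :
  #|[set p | P p]| = count P ord4_pairs.
Proof.
have /permP <- : perm_eq (Finite.enum {: 'I_4 * 'I_4}) ord4_pairs.
  apply: uniq_perm; [by rewrite -enumT enum_uniq | by vm_compute |].
  case=> -[[|[|[|[|//]]]] ?] -[[|[|[|[|//]]]] ?];
    by rewrite -enumT mem_enum; vm_compute.
by rewrite cardsE cardE /enum_mem size_filter.
Qed.

Lemma mem_bits4 (S : {set 'I_4}) i :
  (i \in S) =
  bits4 (inord 0 \in S) (inord 1 \in S) (inord 2 \in S) (inord 3 \in S) i.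
Proof.
by case: i => -[|[|[|[|//]]]] Hi; congr (_ \in S); apply/val_inj; rewrite /= inordK.
Qed.

Lemma swinv_parity_bits b0 b1 b2 b3 c0 c1 c2 c3 :
  let s := bits4 b0 b1 b2 b3 in let t := bits4 c0 c1 c2 c3 in
  all (fun i => ~~ (s i && t i)) ord4 ==>
  (odd (swinv_pred (predU s t) + ninv_pred s t) ==
   odd (ninv_pred (s \o sw_ord) (t \o sw_ord) + (swinv_pred s + swinv_pred t))).
Proof. by move: b0 b1 b2 b3 c0 c1 c2 c3; do 8!case; vm_compute. Qed.

Lemma ninv_predE (S T : {set 'I_4}) (s t : pred 'I_4) :
  (forall i, (i \in S) = s i) -> (forall i, (i \in T) = t i) ->
  ninv S T = ninv_pred s t.
Proof.
move=> eS eT; rewrite /ninv card_set_ord4_pairs.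
by apply: eq_count => p; rewrite /= eS eT.
Qed.

Lemma swinv_predE (S : {set 'I_4}) (s : pred 'I_4) :
  (forall i, (i \in S) = s i) -> swinv S = swinv_pred s.
Proof.
move=> eS; rewrite /swinv card_set_ord4_pairs.
by apply: eq_count => p; rewrite /= !eS !sw_ordE.
Qed.

(* Both sides are the parity of the sign in [(y_S y_T)' = +- y_(sw @: (S :|: T))],
   computed by first multiplying and then applying ', or the other way round. *)
Lemma odd_swinv_setU (S T : {set 'I_4}) : [disjoint S & T] ->
  odd (swinv (S :|: T) + ninv S T) =
  odd (ninv (sw @: S) (sw @: T) + (swinv S + swinv T)).
Proof.
move=> dST; have eS := mem_bits4 S; have eT := mem_bits4 T.
set s := bits4 _ _ _ _ in eS; set t := bits4 _ _ _ _ in eT.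
have eU i : (i \in S :|: T) = predU s t i by rewrite inE eS eT.
have eswS i : (i \in sw @: S) = (s \o sw_ord) i by rewrite mem_imset_sw eS sw_ordE.
have eswT i : (i \in sw @: T) = (t \o sw_ord) i by rewrite mem_imset_sw eT sw_ordE.
rewrite (swinv_predE eU) (swinv_predE eS) (swinv_predE eT).
rewrite (ninv_predE eS eT) (ninv_predE eswS eswT).
have disj : all (fun i => ~~ (s i && t i)) ord4.
  apply/allP => i _; rewrite -eS -eT; apply/negP => /andP [iS iT].
  by rewrite (disjointFr dST iS) in iT.
have := swinv_parity_bits (inord 0 \in S) (inord 1 \in S) (inord 2 \in S)
  (inord 3 \in S) (inord 0 \in T) (inord 1 \in T) (inord 2 \in T) (inord 3 \in T).
by cbv zeta; rewrite -/s -/t => /implyP/(_ disj)/eqP.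
Qed.

Section PrimeMorphism.
Variable K : fieldType.
Local Notation SA := (SA K).

HB.instance Definition _ :=
  GRing.RMorphism.copy (@poly_prime K) (comp_mpoly [tuple 'X_(sw i) | i < 4]).

Definition swsign (S : {set 'I_4}) : {mpoly K[4]} := (-1) ^+ swinv S.

Lemma swsign_setU (S T : {set 'I_4}) : [disjoint S & T] ->
  swsign (S :|: T) * (-1) ^+ ninv S T =
  (-1) ^+ ninv (sw @: S) (sw @: T) * (swsign S * swsign T).
Proof.
by move=> dST; rewrite /swsign -!exprD -signr_odd -odd_swinv_setU // signr_odd.
Qed.

Lemma swsign_small (S : {set 'I_4}) : (#|S| <= 1)%N -> swsign S = 1.
Proof.
move=> S1; rewrite /swsign /swinv (_ : #|_| = 0%N) //.
apply/eqP; rewrite cards_eq0; apply/eqP/setP => -[i j]; rewrite !inE /=.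
apply/negP => /andP [/andP [/andP [iS jS] ij] _].
have ji : j != i by apply: contraTneq ij => ->; rewrite ltnn.
by move: S1; rewrite (cardD1 i) (cardD1 j) !inE iS jS ji.
Qed.

Lemma sa_primeE (f : SA) U :
  sa_prime f U = swsign (sw @: U) * poly_prime (f (sw @: U)).
Proof.
rewrite ffunE (big_pred1 (sw @: U)) // => S /=.
by apply/eqP/eqP => [<-|->]; rewrite imset_swK.
Qed.

Lemma sa_prime_add (f g : SA) : sa_prime (f + g) = sa_prime f + sa_prime g.
Proof.
by apply/ffunP => U; rewrite [in RHS]ffunE !sa_primeE ffunE rmorphD mulrDr.
Qed.

Lemma sa_prime_mul (f g : SA) :
  sa_prime (sa_mul f g) = sa_mul (sa_prime f) (sa_prime g).
Proof.
apply/ffunP => U; rewrite sa_primeE !ffunE rmorph_sum mulr_sumr.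
rewrite [RHS](reindex_inj imset_sw_inj); apply: eq_bigr => S _ /=.
rewrite rmorph_sum mulr_sumr [RHS](reindex_inj imset_sw_inj) /=.
apply: eq_big => T.
  rewrite -!setI_eq0 -imsetI; last by move=> x y _ _; apply: sw_inj.
  rewrite imset_eq0 -imsetU; congr andb.
  by apply/eqP/eqP => [->|<-]; rewrite imset_swK.
move=> /andP [dST /eqP <-].
rewrite !sa_primeE !imset_swK !rmorphM rmorphXn rmorphN1.
by rewrite mulrA swsign_setU //; ring.
Qed.

Lemma sa_prime_poly (p : {mpoly K[4]}) :
  sa_prime (sa_poly p) = sa_poly (poly_prime p).
Proof.
apply/ffunP => U; rewrite sa_primeE !ffunE imset_eq0.
case: eqP => [->|_]; last by rewrite rmorph0 mulr0.
by rewrite imset0 swsign_small ?cards0 // mul1r.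
Qed.

Lemma sa_prime0 : sa_prime (0 : SA) = 0.
Proof. by apply/ffunP => U; rewrite sa_primeE !ffunE rmorph0 mulr0. Qed.

Lemma sa_prime_scal (c : K) : sa_prime (sa_scal c : SA) = sa_scal c.
Proof. by rewrite sa_prime_poly /poly_prime comp_mpolyC. Qed.

Lemma sa_prime_x (i : 'I_4) : sa_prime (sa_x K i) = sa_x K (sw i).
Proof.
by rewrite sa_prime_poly /poly_prime comp_mpolyXU -tnth_nth tnth_mktuple.
Qed.

Lemma sa_prime_y (i : 'I_4) : sa_prime (sa_y K i) = sa_y K (sw i).
Proof.
apply/ffunP => U; rewrite sa_primeE !ffunE.
have -> : (sw @: U == [set i]) = (U == [set sw i]).
  by rewrite -(inj_eq imset_sw_inj) imset_swK imset_set1.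
case: eqP => [->|_]; last by rewrite rmorph0 mulr0.
by rewrite imset_set1 swK swsign_small ?cards1 // mul1r rmorph1.
Qed.

End PrimeMorphism.

Section PrimeSymmetricMatrices.
Variable K : fieldType.

(* The last two conditions say [a'' = a] and [b'' = b]; the product case
   needs them for the right factor. *)
Definition prime_sym (A : mx2 K) :=
  [/\ A 1 1 = sa_prime (A 0 0), A 1 0 = sa_prime (A 0 1),
      A 0 0 = sa_prime (A 1 1) & A 0 1 = sa_prime (A 1 0)].

Lemma mx2_mulE (A B : mx2 K) i j :
  mx2_mul A B i j = sa_mul (A i 0) (B 0 j) + sa_mul (A i 1) (B 1 j).
Proof.
have e0 : ord0 = 0 :> 'I_2 by apply/val_inj.
have e1 : lift ord0 ord0 = 1 :> 'I_2 by apply/val_inj.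
by rewrite mxE big_ord_recl big_ord1 e0 e1.
Qed.

Lemma prime_sym_mx2_of (a b c d : SA K) :
  d = sa_prime a -> c = sa_prime b -> a = sa_prime d -> b = sa_prime c ->
  prime_sym (mx2_of a b c d).
Proof. by move=> *; split; rewrite !mxE. Qed.

Lemma prime_sym_scal (c : K) : prime_sym (mx2_of (sa_scal c) 0 0 (sa_scal c)).
Proof. by apply: prime_sym_mx2_of; rewrite ?sa_prime_scal ?sa_prime0. Qed.

Lemma prime_sym_C (i j : 'I_4) : sw i = j ->
  prime_sym (mx2_of (sa_x K i) (sa_y K i) (sa_y K j) (sa_x K j)).
Proof.
by move=> <-; apply: prime_sym_mx2_of; rewrite ?sa_prime_x ?sa_prime_y ?swK.
Qed.

Lemma prime_sym_add (A B : mx2 K) :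
  prime_sym A -> prime_sym B -> prime_sym (A + B).
Proof.
move=> [a11 a10 a00 a01] [b11 b10 b00 b01].
have addE (i j : 'I_2) : (A + B) i j = A i j + B i j by rewrite mxE.
split; rewrite !addE sa_prime_add.
- by rewrite -a11 -b11.
- by rewrite -a10 -b10.
- by rewrite -a00 -b00.
- by rewrite -a01 -b01.
Qed.

Lemma prime_sym_mul (A B : mx2 K) :
  prime_sym A -> prime_sym B -> prime_sym (mx2_mul A B).
Proof.
move=> [a11 a10 a00 a01] [b11 b10 b00 b01].
split; rewrite !mx2_mulE sa_prime_add !sa_prime_mul addrC.
- by rewrite -a11 -b11 -a10 -b01.
- by rewrite -a11 -b10 -a10 -b00.
- by rewrite -a01 -b10 -a00 -b00.
- by rewrite -a01 -b11 -a00 -b01.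
Qed.

Lemma inF_prime_sym (A : mx2 K) : inF A -> prime_sym A.
Proof.
elim=> {A} [c | | | A B _ + _ | A B _ + _].
- exact: prime_sym_scal.
- by apply: prime_sym_C; rewrite sw_ordE; apply/val_inj.
- by apply: prime_sym_C; rewrite sw_ordE; apply/val_inj.
- exact: prime_sym_add.
- exact: prime_sym_mul.
Qed.

End PrimeSymmetricMatrices.

Theorem lemma4 (K : fieldType)
  (K_infinite : forall s : seq K, exists x : K, x \notin s)
  (K_char : (2%:R : K) != 0)
  (A : mx2 K) :
  inF A ->
  A 1 1 = sa_prime (A 0 0) /\ A 1 0 = sa_prime (A 0 1).
Proof. by move=> /inF_prime_sym [? ? _ _]. Qed.
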